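(* Let $\Sigma=\{\sigma_1,\sigma_2,\dots\}$ be an infinite alphabet totally ordered by $\sigma_1<\sigma_2<\cdots$, let $\mathsf A$ be the Manacher array of some string of length $n$, and let $S$ be the lexicographically minimal string over $\Sigma$ whose Manacher array is $\mathsf A$. Then: (1) For every $i\ge3$, the first occurrence of $\sigma_i$ in $S$, at position $m$ say, is preceded by a substring matching the pattern $ZP_{i-2}$ (i.e. some substring $S[t..m-1]$ matches $ZP_{i-2}$). (2) For every $i\ge3$, every later occurrence of $\sigma_i$ in $S$, at position $m$, is either at a palindromically dependent index or is preceded by a substring $S[t..m-1]$ matching $ZP_{i-2}$. (3) The number of distinct symbols occurring in $S$ equals the minimum number of distinct symbols over all strings (over any alphabet) whose Manacher array is $\mathsf A$.
   Context: The Manacher array of $S$ of length $n$: $\mathsf A[2k-1]$ is the largest $r\ge0$ with $1\le k-r$, $k+r\le n$, $S[k-r..k+r]$ a palindrome, and $\mathsf A[2k]$ the largest $r\ge0$ with $1\le k-r+1$, $k+r\le n$, $S[k-r+1..k+r]$ a palindrome. The center of $S[a..b]$ is $(a+b)/2$. An index $m$ of $S$ is palindromically dependent iff there is a palindromic substring $p=S[a..b]$ with center $c_p=(a+b)/2<m\le b$ (so $S[m]$ is forced equal to $S[a+b-m]$); otherwise it is palindromically independent. Palindromic Zimin patterns: a word matches $ZP_1$ if it is a palindrome $P_1$ (possibly empty); a word $W$ matches $ZP_k$ ($k\ge2$) if $W=U P_k U$ where $U$ matches $ZP_{k-1}$ using palindromes $P_1,\dots,P_{k-1}$, and $P_k$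 is a palindrome different from each of $P_1,\dots,P_{k-1}$. *)

(* Strings are sequences; positions are 1-indexed as in the paper. *)
From mathcomp Require Import all_boot.
Set Implicit Arguments. Unset Strict Implicit. Unset Printing Implicit Defensive.

Section Strings.
Variable T : eqType.

Definition pal (s : seq T) : bool := s == rev s.

(* S[a..b] (1-indexed, inclusive); empty when b < a *)
Definition sub (S : seq T) (a b : nat) : seq T := take (b.+1 - a) (drop a.-1 S).

(* Entry j (1 <= j <= 2n) of the Manacher array of S, n = size S:
   A[2k-1] = largest r with 1 <= k-r, k+r <= n, S[k-r..k+r] palindrome;
   A[2k]   = largest r with 1 <= k-r+1, k+r <= n, S[k-r+1..k+r] palindrome. *)
Definition manacher_entry (S : seq T) (j : nat) : nat :=
  let n := size S in
  if odd j then
    let k := j.+1./2 in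
    \max_(r < n.+1 | [&& r < k, k + r <= n & pal (sub S (k - r) (k + r))]) r
  else
    let k := j./2 in
    \max_(r < n.+1 | [&& r <= k, k + r <= n & pal (sub S (k - r).+1 (k + r))]) r.

Definition manacher (S : seq T) : seq nat :=
  [seq manacher_entry S j | j <- iota 1 (2 * size S)].

(* Word of a palindromic Zimin pattern instance: the list Ps = [:: P_k; ...; P_1]
   gives  Z_1 = P_1,  Z_j = Z_{j-1} ++ P_j ++ Z_{j-1}. *)
Fixpoint zword (Ps : seq (seq T)) : seq T :=
  if Ps is P :: Ps' then zword Ps' ++ P ++ zword Ps' else [::].

(* w matches ZP_k: there are palindromes P_1..P_k, each P_j different from
   P_1..P_{j-1} (i.e. pairwise distinct), producing w. *)
Definition matchesZP (k : nat) (w : seq T) : Prop :=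
  exists Ps : seq (seq T),
    [/\ size Ps = k, all pal Ps, uniq Ps & zword Ps = w].

Definition pal_dependent (S : seq T) (m : nat) : Prop :=
  exists a b, [&& 1 <= a, a <= b, b <= size S, pal (sub S a b),
                  a + b < 2 * m & m <= b].

End Strings.

Fixpoint lex_le (s t : seq nat) : bool :=
  match s, t with
  | [::], _ => true
  | _ :: _, [::] => false
  | x :: s', y :: t' => (x < y) || ((x == y) && lex_le s' t')
  end.

From mathcomp Require Import all_boot zify.
From Stdlib Require Import Classical.
Set Implicit Arguments. Unset Strict Implicit. Unset Printing Implicit Defensive.

(* Two strings have the same Manacher array iff they have the same palindromic
   intervals, so a prefix with the right palindromic intervals can always be
   completed: a new letter is either forced by a palindrome ending at the new
   position, or any letter closing no palindrome (e.g. a fresh one) works.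
   Hence at a palindromically independent position m of the lexicographically
   minimal S, every letter y < S[m] is blocked: y = S[a] for a "mirror" a < m,
   i.e. with S[a+1..m-1] a palindrome.  For the last mirror carrying each such
   letter, two mirrors a < a' make S (a'-a)-periodic on [a+1, m-1], and
   last-ness puts a' beyond the middle, so that
   S[a+1..m-1] = S[a'+1..m-1] ++ P ++ S[a'+1..m-1] with P a palindrome ending
   with S[a'].  Iterating over the mirrors in increasing order yields the
   palindromic Zimin pattern; its pieces are distinct because they end with
   distinct letters.  Finally, equality of the letters at two mirrors is itself
   a palindrome condition, so in any w with the same Manacher array the letters
   at these mirrors and at m are still pairwise distinct; at the first
   occurrence of each letter of S this bounds the alphabet of S by that of w. *)

Section PalindromicIntervals.
Variables (T : eqType) (f : nat -> T).

Definition palf a b := all (fun i => f i == f (a + b - i)) (iota a (b.+1 - a)).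

Lemma palfP a b : reflect (forall i, a <= i <= b -> f i = f (a + b - i)) (palf a b).
Proof.
apply: (iffP allP) => H i.
- by move=> hi; apply/eqP/H; rewrite mem_iota; lia.
- by rewrite mem_iota => hi; apply/eqP/H; lia.
Qed.

Lemma palf_short a b : b <= a -> palf a b.
Proof. by move=> ba; apply/palfP => i hi; have -> : a + b - i = i by lia. Qed.

Lemma palf_concentric a b c d :
  palf a b -> a <= c -> d <= b -> a + b = c + d -> palf c d.
Proof. by move=> /palfP H ac db eab; apply/palfP => i hi; rewrite -eab; apply: H; lia. Qed.

Lemma palf_inner a b : palf a b -> palf a.+1 b.-1.
Proof.
move=> pab; have [ba | ab] := leqP b a; first by apply: palf_short; lia.
by apply: (palf_concentric pab); lia.
Qed.

Lemma palfE_ends a b : a <= b -> palf a b = (f a == f b) && palf a.+1 b.-1.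
Proof.
move=> ab; apply/idP/andP => [pab | [/eqP fab /palfP H]].
- split; last exact: palf_inner.
  by apply/eqP; move/palfP: pab => /(_ a); rewrite addKn; apply; lia.
- apply/palfP => i hi.
  have [-> | ia] := eqVneq i a; first by rewrite addKn.
  have [-> | ib] := eqVneq i b; first by rewrite addnK.
  by rewrite H; [congr f | ]; lia.
Qed.

End PalindromicIntervals.

Lemma eq_palf (T : eqType) (f g : nat -> T) a b :
  (forall i, a <= i <= b -> f i = g i) -> palf f a b = palf g a b.
Proof.
move=> fg; apply/palfP/palfP => H i hi.
- by rewrite -!fg; [apply: H | ..]; lia.
- by rewrite !fg; [apply: H | ..]; lia.
Qed.

Definition nth1 (T : Type) (x0 : T) (s : seq T) i := nth x0 s i.-1.

Section Subwords.
Variables (T : eqType) (x0 : T) (S : seq T).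

Lemma sub_map a b : 1 <= a -> b <= size S ->
  sub S a b = map (nth1 x0 S) (iota a (b.+1 - a)).
Proof.
move=> a1 bS; apply: (eq_from_nth (x0 := x0)) => [|i].
  by rewrite size_map size_iota size_take size_drop; case: ltnP; lia.
rewrite size_take size_drop => hi.
have hi' : i < b.+1 - a by move: hi; case: (ltnP (b.+1 - a)); lia.
rewrite (nth_map 0) ?size_iota // nth_iota // nth_take // nth_drop /nth1.
by congr nth; lia.
Qed.

Lemma size_sub a b : 1 <= a -> b <= size S -> size (sub S a b) = b.+1 - a.
Proof. by move=> a1 bS; rewrite size_takel // size_drop; lia. Qed.

Lemma last_sub a b : 1 <= a <= b -> b <= size S -> last x0 (sub S a b) = nth1 x0 S b.
Proof.
move=> ab bS; rewrite -nth_last size_sub ?sub_map; try lia.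
rewrite (nth_map 0) ?size_iota; last lia.
by rewrite nth_iota; [congr nth1 | ]; lia.
Qed.

Lemma pal_subE a b : 1 <= a -> b <= size S -> pal (sub S a b) = palf (nth1 x0 S) a b.
Proof.
move=> a1 bS; rewrite /pal sub_map //; set n := b.+1 - a.
apply/eqP/palfP => [H i hi | H].
- have := congr1 (nth x0 ^~ (i - a)) H.
  rewrite nth_rev ?size_map ?size_iota; last lia.
  rewrite !(nth_map 0) ?size_iota; try lia.
  rewrite !nth_iota; try lia.
  have [-> ->] : a + (i - a) = i /\ a + (n - (i - a).+1) = a + b - i by lia.
  by [].
- apply: (eq_from_nth (x0 := x0)); first by rewrite size_rev.
  move=> i; rewrite size_map size_iota => hi.
  rewrite nth_rev ?size_map ?size_iota // !(nth_map 0) ?size_iota; try lia.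
  rewrite !nth_iota; try lia.
  by rewrite H; [congr nth1 | ]; lia.
Qed.

Lemma pal_sub_concentric a b c d : 1 <= a -> b <= size S -> a <= c -> d <= b ->
  a + b = c + d -> pal (sub S a b) -> pal (sub S c d).
Proof.
move=> a1 bS ac db abcd; rewrite !pal_subE; try lia.
by move/palf_concentric; apply.
Qed.

End Subwords.

Lemma bigmax_downclosedE n (P : pred nat) r :
  P 0 -> (forall i j, j <= i -> P i -> P j) -> r <= n ->
  P r = (r <= \max_(i < n.+1 | P i) i).
Proof.
move=> P0 Pdown rn; apply/idP/idP => [Pr | ].
- by apply: (leq_bigmax_cond (Ordinal (rn : r < n.+1))).
- rewrite (bigmax_eq_arg (ord0 : 'I_n.+1)) //.
  by case: arg_maxnP => //= i Pi _ ri; apply: Pdown Pi.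
Qed.

(* Whatever its parity, [a..b] is the interval of radius [(b - a).+1./2] around
   entry [(a + b).-1] of the array. *)
Lemma pal_manacher_entry (T : eqType) (x0 : T) (S : seq T) a b : 1 <= a <= b -> b <= size S ->
  pal (sub S a b) = ((b - a).+1./2 <= manacher_entry S (a + b).-1).
Proof.
move=> ab bS; rewrite /manacher_entry; case: ifP => odd_ab.
- set k := ((a + b).-1.+1)./2; set r := (b - a).+1./2.
  rewrite -(bigmax_downclosedE
    (P := fun r => [&& r < k, k + r <= size S & pal (sub S (k - r) (k + r))])); last lia.
  + have [-> ->] : k - r = a /\ k + r = b by lia.
    have -> : r < k by lia.
    by rewrite bS.
  + by rewrite subn0 addn0 (pal_subE x0) ?palf_short; lia.
  + move=> i j ji /and3P [ik kiS pi]; apply/and3P; split; try lia.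
    by apply: (pal_sub_concentric x0 _ _ _ _ _ pi); lia.
- set k := ((a + b).-1)./2; set r := (b - a).+1./2.
  rewrite -(bigmax_downclosedE
    (P := fun r => [&& r <= k, k + r <= size S & pal (sub S (k - r).+1 (k + r))])); last lia.
  + have [-> ->] : (k - r).+1 = a /\ k + r = b by lia.
    have -> : r <= k by lia.
    by rewrite bS.
  + by rewrite subn0 addn0 (pal_subE x0) ?palf_short; lia.
  + move=> i j ji /and3P [ik kiS pi]; apply/and3P; split; try lia.
    by apply: (pal_sub_concentric x0 _ _ _ _ _ pi); lia.
Qed.

Definition pal_equiv (T1 T2 : eqType) (f : nat -> T1) (g : nat -> T2) n :=
  forall a b, 1 <= a -> b <= n -> palf f a b = palf g a b.

Lemma size_manacher (T : eqType) (S : seq T) : size (manacher S) = 2 * size S.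
Proof. by rewrite size_map size_iota. Qed.

Lemma nth_manacher (T : eqType) (S : seq T) j : 1 <= j <= 2 * size S ->
  nth 0 (manacher S) j.-1 = manacher_entry S j.
Proof.
move=> j_in; rewrite (nth_map 0) ?size_iota ?nth_iota; try lia.
by congr manacher_entry; lia.
Qed.

Lemma manacher_eqP (T1 T2 : eqType) (x1 : T1) (x2 : T2) (S1 : seq T1) (S2 : seq T2) :
  manacher S1 = manacher S2 <->
  size S1 = size S2 /\ pal_equiv (nth1 x1 S1) (nth1 x2 S2) (size S1).
Proof.
split => [eqM | [eqS equiv]].
  have eqS : size S1 = size S2 by have := congr1 size eqM; rewrite !size_manacher; lia.
  split=> // a b a1 bS; have [ba | ab] := ltnP b a; first by rewrite !palf_short; lia.
  rewrite -(pal_subE x1) -?(pal_subE x2) ?(pal_manacher_entry x1) ?(pal_manacher_entry x2); try lia.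
  by rewrite -!nth_manacher ?eqM; lia.
rewrite /manacher -eqS; apply: eq_map => j; rewrite /manacher_entry -eqS.
case: odd; apply: eq_bigl => r /=.
- case: (boolP (r < _)) => //= rk; case: (boolP (_ + r <= _)) => //= krS.
  by rewrite (pal_subE x1) ?(pal_subE x2) ?equiv; lia.
- case: (boolP (r <= _)) => //= rk; case: (boolP (_ + r <= _)) => //= krS.
  by rewrite (pal_subE x1) ?(pal_subE x2) ?equiv; lia.
Qed.

Section Mirrors.
Variables (T : eqType) (f : nat -> T) (e : nat).

(* [f] is a palindrome on [a.+1..e], so the letter [f a] at position [e.+1]
   would make [a..e.+1] a palindrome. *)
Definition mirror a := (0 < a <= e) && palf f a.+1 e.

Definition last_mirror a :=
  mirror a && all (fun b => mirror b ==> (f b != f a)) (iota a.+1 (e - a)).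

Lemma mirror_top : 0 < e -> mirror e.
Proof. by move=> e0; rewrite /mirror e0 leqnn palf_short. Qed.

Lemma last_mirror_neq a b : last_mirror a -> a < b -> mirror b -> f b != f a.
Proof.
case/andP=> _ /allP last_a ab mb.
have b_in : b \in iota a.+1 (e - a) by rewrite mem_iota; case/andP: mb => /andP [_ be] _; lia.
exact: implyP (last_a b b_in) mb.
Qed.

Lemma exists_last_mirror a : mirror a -> exists2 b, last_mirror b & f b = f a.
Proof.
move=> ma; have exP : exists b, mirror b && (f b == f a) by exists a; rewrite ma eqxx.
have boundP b : mirror b && (f b == f a) -> b <= e by case/andP => /andP [/andP [_ ->]].
case: (ex_maxnP exP boundP) => b /andP [mb /eqP fb] maxb.
exists b => //; rewrite /last_mirror mb; apply/allP => c; rewrite mem_iota => cb.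
apply/implyP => mc; apply/negP => /eqP fc.
by have := maxb c; rewrite mc fc fb eqxx => /(_ isT); lia.
Qed.

Lemma uniq_last_mirror_letters r : uniq r -> all last_mirror r -> uniq (map f r).
Proof.
move=> uniq_r /allP lm; rewrite map_inj_in_uniq // => a b ar br fab.
have [ab | ba | //] := ltngtP a b.
- by have := last_mirror_neq (lm a ar) ab (andP (lm b br)).1; rewrite fab eqxx.
- by have := last_mirror_neq (lm b br) ba (andP (lm a ar)).1; rewrite fab eqxx.
Qed.

Lemma mirror_period a a' : mirror a -> mirror a' -> a <= a' ->
  forall i, a' < i <= e -> f i = f (i - (a' - a)).
Proof.
move=> /andP [_ /palfP Pa] /andP [_ /palfP Pa'] aa' i i_in.
rewrite Pa'; last lia.
by rewrite Pa; [congr f | ]; lia.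
Qed.

(* Two mirrors make [f] [(a' - a)]-periodic on [a.+1..e]; were [a'] not beyond
   the middle of [a.+1..e], position [2 * a' - a] would be a later mirror
   carrying the letter [f a']. *)
Lemma mirror_doubling a a' : mirror a -> last_mirror a' -> a < a' -> a + e < 2 * a'.
Proof.
move=> ma la' aa'; have ma' := (andP la').1; rewrite ltnNge; apply/negP => a'_small.
have per := mirror_period ma ma' (ltnW aa').
have Pa := palfP _ _ _ (andP ma).2.
set d := a' - a; set b := a' + d.
have mb : mirror b.
  rewrite /mirror; apply/andP; split; first lia.
  apply/palfP => i i_in.
  rewrite (per i); last lia.
  rewrite (per (b.+1 + e - i)); last lia.
  by rewrite Pa; [congr f | ]; lia.
have fb : f b = f a' by rewrite per; [congr f | ]; lia.
have a'b : a' < b by lia.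
by have := last_mirror_neq la' a'b mb; rewrite fb eqxx.
Qed.

Lemma eq_mirror_palf p q : p < q -> mirror p -> mirror q ->
  palf f p (p.+1 + e - q) = (f p == f q).
Proof.
move=> pq /andP [_ /palfP Pp] /andP [/andP [_ qe] /palfP Pq].
have shift j : p < j <= p + e - q -> f j = f (q - p + j).
  move=> j_in; rewrite Pp; last lia.
  by rewrite Pq; [congr f | ]; lia.
rewrite palfE_ends; last lia.
have -> : palf f p.+1 (p.+1 + e - q).-1.
  apply/palfP => i i_in; rewrite (shift i); last lia.
  by rewrite (Pp (p.+1 + _ - i)); [congr f | ]; lia.
rewrite andbT (Pp (p.+1 + e - q)); last lia.
by have -> : p.+1 + e - (p.+1 + e - q) = q by lia.
Qed.

End Mirrors.

Definition last_mirrors_below (f : nat -> nat) e k :=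
  [seq a <- iota 1 e | last_mirror f e a && (f a < k)].

Section LastMirrorsBelow.
Variables (f : nat -> nat) (e k : nat).

Lemma sorted_last_mirrors_below : sorted ltn (last_mirrors_below f e k).
Proof. exact/sorted_filter/iota_ltn_sorted/ltn_trans. Qed.

Lemma uniq_last_mirrors_below : uniq (last_mirrors_below f e k).
Proof. exact/filter_uniq/iota_uniq. Qed.

Lemma all_last_mirrors_below : all (last_mirror f e) (last_mirrors_below f e k).
Proof. by apply/allP => a; rewrite mem_filter => /andP [/andP []]. Qed.

End LastMirrorsBelow.

Section PalEquivalence.
Variables (T T' : eqType) (f : nat -> T) (g : nat -> T') (n : nat).
Hypothesis fg : pal_equiv f g n.

Lemma pal_equiv_mirror e a : e <= n -> mirror f e a = mirror g e a.
Proof.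
move=> en; rewrite /mirror; case: (0 < a <= e) / andP => //= [[a0 ae]].
by apply: fg; lia.
Qed.

Lemma pal_equiv_mirror_eq e p q : e <= n -> mirror f e p -> mirror f e q ->
  (f p == f q) = (g p == g q).
Proof.
move=> en; wlog pq : p q / p <= q => [hwlog | mp mq].
  by case: (leqP p q) => [|/ltnW] pq mp mq; [|rewrite eq_sym [g p == _]eq_sym]; apply: hwlog.
move: pq; rewrite leq_eqVlt => /orP [/eqP -> | pq]; first by rewrite !eqxx.
have [mgp mgq] : mirror g e p /\ mirror g e q by rewrite -!(pal_equiv_mirror _ en).
rewrite -(eq_mirror_palf pq mp mq) -(eq_mirror_palf pq mgp mgq).
by apply: fg; case/andP: mp => /andP [p0 _] _; lia.
Qed.

Lemma pal_equiv_last_mirror e a : e <= n -> last_mirror f e a = last_mirror g e a.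
Proof.
move=> en; rewrite /last_mirror -(pal_equiv_mirror _ en).
case ma : (mirror f e a) => //=; apply: eq_all => b.
rewrite -(pal_equiv_mirror _ en); case mb : (mirror f e b) => //=.
by rewrite (pal_equiv_mirror_eq en mb ma).
Qed.

End PalEquivalence.

Section LetterExtension.
Variables (T T' : eqType) (x0 : T) (g : nat -> T') (u : seq T).
Hypothesis equ : pal_equiv (nth1 x0 u) g (size u).

(* The only new intervals end at [(size u).+1], and [a..(size u).+1] is a
   palindrome iff [a] is a mirror and the letters at both ends agree. *)
Lemma pal_equiv_rcons z :
  (forall a, mirror g (size u) a -> (nth1 x0 u a == z) = (g a == g (size u).+1)) ->
  pal_equiv (nth1 x0 (rcons u z)) g (size u).+1.
Proof.
set m := size u; set h := nth1 x0 (rcons u z) => letter_z.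
have hu i : 1 <= i <= m -> h i = nth1 x0 u i.
  by move=> i_in; rewrite /h /nth1 nth_rcons; case: ifP => // /negbT; lia.
have hz : h m.+1 = z by rewrite /h /nth1 nth_rcons ltnn eqxx.
have pal_hu a b : 1 <= a -> b <= m -> palf h a b = palf g a b.
  move=> a1 bm; rewrite -equ //.
  by apply: eq_palf => i i_in; apply: hu; lia.
move=> a b a1 bm; have [{}bm | ->] : b <= m \/ b = m.+1 by lia.
  exact: pal_hu.
have [ma | am] := ltnP m a; first by rewrite !palf_short; lia.
have am1 : a <= m.+1 by lia.
rewrite (palfE_ends h am1) (palfE_ends g am1) /= pal_hu ?hz ?hu; try lia.
case mg : (palf g a.+1 m); rewrite ?andbF ?andbT //.
by apply: letter_z; rewrite /mirror mg; lia.
Qed.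

End LetterExtension.

(* Either some palindrome [c..(size u).+1] forces the letter, or a fresh letter
   closes no palindrome. *)
Lemma pal_equiv_rcons_exists (T : eqType) (g : nat -> T) (u : seq nat) :
  pal_equiv (nth1 0 u) g (size u) -> exists z, pal_equiv (nth1 0 (rcons u z)) g (size u).+1.
Proof.
move=> equ.
have [/hasP [c] | /hasPn open] := boolP (has (fun c => palf g c (size u).+1) (iota 1 (size u))).
  rewrite mem_iota => c_in; rewrite palfE_ends /=; last lia.
  case/andP=> /eqP gc pc; exists (nth1 0 u c); apply: pal_equiv_rcons => // a ma.
  have mc : mirror g (size u) c by rewrite /mirror pc andbT; lia.
  have [mua muc] : mirror (nth1 0 u) (size u) a /\ mirror (nth1 0 u) (size u) c.
    by rewrite !(pal_equiv_mirror equ).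
  by rewrite -gc (pal_equiv_mirror_eq equ _ mua muc).
exists (\max_(x <- u) x).+1; apply: pal_equiv_rcons => // a /andP [/andP [a0 au] pa].
have -> : (g a == g (size u).+1) = false.
  apply/negP => /eqP ga; have := open a; rewrite mem_iota palfE_ends /=; last exact: leqW.
  have au1 : a < 1 + size u by rewrite add1n ltnS.
  by move/implyP; rewrite ga eqxx pa a0 au1.
apply/negP => /eqP ua; have : nth1 0 u a <= \max_(x <- u) x.
  by apply: leq_bigmax_seq => //; apply: mem_nth; rewrite prednK.
by rewrite ua ltnn.
Qed.

Lemma manacher_completion (T : eqType) (x0 : T) (S : seq T) (u : seq nat) :
  size u <= size S -> pal_equiv (nth1 0 u) (nth1 x0 S) (size u) ->
  exists v, manacher (u ++ v) = manacher S.
Proof.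
move Ek : (size S - size u) => k; elim: k u Ek => [|k IH] u Ek uS equ.
  exists [::]; rewrite cats0; apply/(manacher_eqP 0 x0); split => //.
  by apply/eqP; rewrite eqn_leq uS -subn_eq0 Ek.
have [z equz] := pal_equiv_rcons_exists equ.
have [|||v Ev] := IH (rcons u z); rewrite ?size_rcons //; try lia.
by exists (z :: v); rewrite -cat_rcons.
Qed.

Definition lexmin (S : seq nat) := forall S', manacher S' = manacher S -> lex_le S S'.

Lemma lex_le_cat_gt (p s t : seq nat) x y : y < x -> lex_le (p ++ x :: s) (p ++ y :: t) = false.
Proof.
move=> yx; elim: p => [|c p IH] /=; last by rewrite ltnn eqxx.
by rewrite ltnNge (ltnW yx) /=; case: eqP => // xy; lia.
Qed.

(* Otherwise putting [y] at [e.+1] and completing would give a lexicographically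
   smaller string with the same Manacher array. *)
Lemma lexmin_mirror (S : seq nat) e y : lexmin S -> e < size S ->
  (forall a, 1 <= a <= e -> ~~ palf (nth1 0 S) a e.+1) ->
  y < nth1 0 S e.+1 -> exists2 a, mirror (nth1 0 S) e a & nth1 0 S a = y.
Proof.
move=> minS eS indep ySe; set s := nth1 0 S.
have [/hasP [a _ /andP [ma /eqP sa]] | /hasPn none] :=
  boolP (has (fun a => mirror s e a && (s a == y)) (iota 1 e)); first by exists a.
set u := take e S; have su : size u = e by rewrite size_takel; lia.
have us i : 1 <= i <= e -> nth1 0 u i = s i.
  by move=> i_in; rewrite /nth1 nth_take //; lia.
have equ : pal_equiv (nth1 0 u) s (size u).
  by move=> a b a1 be; apply: eq_palf => i i_in; apply: us; lia.
have equy : pal_equiv (nth1 0 (rcons u y)) s (size (rcons u y)).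
  rewrite size_rcons; apply: pal_equiv_rcons => // a; rewrite su => ma.
  have /andP [/andP [a0 ae] pa] := ma.
  rewrite us; last by rewrite a0.
  have -> : (s a == s e.+1) = false.
    apply/negP => /eqP sa; have := indep a; rewrite -/s palfE_ends /=; last exact: leqW.
    by move/implyP; rewrite sa eqxx pa a0 ae.
  apply/negP => /eqP say; have := none a; rewrite mem_iota ma say eqxx.
  by move/implyP; rewrite a0 ltnS ae.
have uyS : size (rcons u y) <= size S by rewrite size_rcons su.
have [v Ev] := manacher_completion uyS equy.
have := minS _ Ev; rewrite cat_rcons.
by rewrite -{1}(cat_take_drop e S) (drop_nth 0) // lex_le_cat_gt.
Qed.

Lemma map_iota_shift (T : Type) (f : nat -> T) a b n :
  (forall k, k < n -> f (a + k) = f (b + k)) -> map f (iota a n) = map f (iota b n).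
Proof.
elim: n a b => //= n IH a b fab; congr cons; first by have := fab 0 (ltn0Sn _); rewrite !addn0.
by apply: IH => k kn; have := fab k.+1 kn; rewrite !addnS -!addSn.
Qed.

Section ZiminPattern.
Variables (T : eqType) (x0 : T) (S : seq T) (e : nat).
Hypothesis eS : e <= size S.
Local Notation s := (nth1 x0 S).

Lemma mirror_split a a' : mirror s e a -> mirror s e a' -> a < a' -> a + e < 2 * a' ->
  let P := sub S (a + e - a').+1 a' in
  [/\ pal P, P != [::], last x0 P = s a' &
      sub S a.+1 e = sub S a'.+1 e ++ P ++ sub S a'.+1 e].
Proof.
move=> ma ma' aa' doubled P.
have /andP [/andP [a0 ae] pa] := ma; have /andP [/andP [a'0 a'e] pa'] := ma'.
split.
- by rewrite /P (pal_subE x0); [apply: (palf_concentric pa) | ..]; lia.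
- by rewrite /P -size_eq0 size_sub; lia.
- by rewrite /P last_sub //; lia.
rewrite /P !(sub_map x0); try lia.
have -> : e.+1 - a.+1 = (e - a') + ((2 * a' - a - e) + (e - a')) by lia.
rewrite !iotaD !map_cat; congr (_ ++ (_ ++ _)); try by congr (map s (iota _ _)); lia.
apply: map_iota_shift => k k_lt.
by rewrite (mirror_period ma ma' (ltnW aa') (i := a'.+1 + k)); [congr s | ]; lia.
Qed.

(* The last component is the induction invariant: nonempty pieces end with the
   letter of a mirror beyond [a], which keeps each new piece distinct from the
   previous ones. *)
Lemma zimin_last_mirrors r : forall a, sorted ltn (a :: r) -> all (last_mirror s e) (a :: r) ->
  exists Ps : seq (seq T), [/\ size Ps = (size r).+1, all (@pal T) Ps, uniq Ps,
    zword Ps = sub S a.+1 e &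
    {in Ps, forall P, P != [::] -> exists2 b, a < b & mirror s e b /\ last x0 P = s b}].
Proof.
elim: r => [|a' r IH] a /=.
  move=> _ /andP [/andP [ma _] _]; have /andP [/andP [a0 ae] pa] := ma.
  exists [:: sub S a.+1 e]; split => //=.
  - by rewrite (pal_subE x0); lia.
  - by rewrite cats0.
  move=> P; rewrite inE => /eqP -> nonempty.
  have ae' : a < e by move: nonempty; rewrite -size_eq0 size_sub; lia.
  by exists e => //; rewrite mirror_top ?last_sub //; lia.
case/andP=> aa' sorted_r /andP [la lr].
have [Ps [size_Ps pal_Ps uniq_Ps zword_Ps lasts_Ps]] := IH a' sorted_r lr.
have ma := (andP la).1; have la' := (andP lr).1; have ma' := (andP la').1.
have [pal_P nonempty_P last_P split_P] :=
  mirror_split ma ma' aa' (mirror_doubling ma la' aa').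
set P := sub S (a + e - a').+1 a' in pal_P nonempty_P last_P split_P.
exists (P :: Ps); split => /=.
- by rewrite size_Ps.
- by rewrite pal_P pal_Ps.
- rewrite uniq_Ps andbT; apply/negP => /lasts_Ps /(_ nonempty_P) [b a'b [mb lastb]].
  by have := last_mirror_neq la' a'b mb; rewrite -lastb last_P eqxx.
- by rewrite zword_Ps split_P.
move=> Q; rewrite inE => /orP [/eqP -> _ | /lasts_Ps lastQ /lastQ [b a'b mb]].
  by exists a'.
by exists b => //; apply: ltn_trans a'b.
Qed.

Lemma matchesZP_last_mirrors a r : sorted ltn (a :: r) -> all (last_mirror s e) (a :: r) ->
  matchesZP (size r).+1 (sub S a.+1 e).
Proof.
move=> sorted_r lr; have [Ps [? ? ? ? _]] := zimin_last_mirrors sorted_r lr.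
by exists Ps.
Qed.

End ZiminPattern.

Section LexMinimalString.
Variables (S : seq nat) (e : nat).
Hypotheses (minS : lexmin S) (eS : e < size S)
  (indep : forall a, 1 <= a <= e -> ~~ palf (nth1 0 S) a e.+1).
Local Notation s := (nth1 0 S).
Local Notation r k := (last_mirrors_below s e k).

Lemma size_last_mirrors_below k : k <= s e.+1 -> size (r k) = k.
Proof.
move=> k_le; rewrite -(size_map s) -[RHS](size_iota 0); apply/eqP; rewrite eqn_leq.
have uniq_s : uniq (map s (r k)).
  exact: uniq_last_mirror_letters (uniq_last_mirrors_below _ _ _) (all_last_mirrors_below _ _ _).
rewrite (uniq_leq_size uniq_s) /=; last first.
  move=> y /mapP [a]; rewrite mem_filter => /andP [/andP [_ ska] _] ->.
  by rewrite mem_iota add0n ska.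
apply: uniq_leq_size (iota_uniq 0 k) _ => y; rewrite mem_iota /= => yk.
have ys : y < s e.+1 by lia.
have [a ma say] := lexmin_mirror minS eS indep ys.
have [b lb sb] := exists_last_mirror ma.
apply/mapP; exists b; last by rewrite sb say.
rewrite mem_filter lb sb say yk mem_iota.
by case/andP: lb => /andP [/andP [b0 be] _] _; lia.
Qed.

Lemma lexmin_matchesZP : 2 <= s e.+1 ->
  exists t, 1 <= t <= e.+1 /\ matchesZP (s e.+1 - 1) (sub S t e).
Proof.
move=> s2; have := size_last_mirrors_below (leq_subr 1 (s e.+1)).
have := sorted_last_mirrors_below s e (s e.+1 - 1).
have := all_last_mirrors_below s e (s e.+1 - 1).
case: (r _) => [|a rest] /=; first lia.
move=> lr sr <-; exists a.+1; split; last exact: (@matchesZP_last_mirrors _ 0 _ _ (ltnW eS) a rest sr lr).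
by case/andP: lr => /andP [/andP [/andP [a0 ae] _] _] _; lia.
Qed.

Lemma lexmin_letter_bound (T : eqType) (w : seq T) :
  manacher w = manacher S -> s e.+1 < size (undup w).
Proof.
case: w => [|w0 w'] mw; first by have := congr1 size mw; rewrite !size_manacher /=; lia.
set w := w0 :: w' in mw *; have [sw equ] := (manacher_eqP w0 0 w S).1 mw.
have ew : e < size w by rewrite sw.
set W := nth1 w0 w; set rr := r (s e.+1).
have lr : all (last_mirror W e) rr.
  apply/allP => a /(allP (all_last_mirrors_below _ _ _)) la.
  by rewrite (pal_equiv_last_mirror equ) //; lia.
have uniq_W : uniq (W e.+1 :: map W rr).
  rewrite /= (uniq_last_mirror_letters (uniq_last_mirrors_below _ _ _) lr) andbT.
  apply/mapP => [[a /(allP lr) /andP [ma _] We]].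
  have /andP [/andP [a0 ae] pa] := ma.
  have := @indep a; rewrite -equ //.
  rewrite -/W palfE_ends /=; last exact: leqW.
  by rewrite We eqxx pa a0 ae => /(_ isT).
apply: leq_trans (uniq_leq_size uniq_W _); first by rewrite /= size_map size_last_mirrors_below.
move=> _ /predU1P [-> | /mapP [a /(allP lr) /andP [/andP [/andP [a0 ae] _] _] ->]];
  by rewrite mem_undup; apply: mem_nth; lia.
Qed.

End LexMinimalString.

Lemma pal_dependent_earlier (T : eqType) (x0 : T) (S : seq T) m :
  pal_dependent S m -> exists2 m', 1 <= m' < m & nth1 x0 S m' = nth1 x0 S m.
Proof.
case=> a [b /and5P [a1 ab bS + /andP [abm mb]]]; rewrite (pal_subE x0) // => /palfP pab.
by exists (a + b - m); [lia | rewrite pab; [congr nth1 | ]; lia].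
Qed.

Lemma not_pal_dependent (T : eqType) (x0 : T) (S : seq T) m :
  ~ pal_dependent S m -> m <= size S -> forall a, 1 <= a < m -> ~~ palf (nth1 x0 S) a m.
Proof.
move=> indep mS a a_in; apply/negP => pam; apply: indep; exists a, m.
by rewrite (pal_subE x0) ?pam //; lia.
Qed.

Lemma lexmin_matchesZP_indep (S : seq nat) m : lexmin S -> 1 <= m <= size S ->
  ~ pal_dependent S m -> 2 <= nth1 0 S m ->
  exists t, 1 <= t <= m /\ matchesZP (nth1 0 S m - 1) (sub S t m.-1).
Proof.
case: m => [|e] // minS eS indep; apply: lexmin_matchesZP => //.
exact: not_pal_dependent indep eS.
Qed.

Lemma lexmin_undup_size (S : seq nat) (T : eqType) (w : seq T) :
  lexmin S -> manacher w = manacher S -> size (undup S) <= size (undup w).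
Proof.
move=> minS mw; rewrite -(size_iota 0 (size (undup w))).
apply: uniq_leq_size (undup_uniq S) _ => x; rewrite mem_undup mem_iota /= => xS.
set e := index x S; have eS : e < size S by rewrite index_mem.
have first_x : nth1 0 S e.+1 = x by rewrite /nth1 nth_index.
have indep : ~ pal_dependent S e.+1.
  case/(pal_dependent_earlier 0) => m' m'e; rewrite first_x /nth1 => Sm'.
  have m'_lt : m'.-1 < e by lia.
  by have := before_find 0 m'_lt; rewrite /= Sm' eqxx.
rewrite -first_x; apply: (lexmin_letter_bound minS eS _ mw).
exact: not_pal_dependent indep eS.
Qed.

Theorem theorem5p1 (T0 : eqType) (w0 : seq T0) (A : seq nat) (S : seq nat) :
  manacher w0 = A ->
  manacher S = A ->
  (forall S' : seq nat, manacher S' = A -> lex_le S S') ->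
  [/\ (forall i m : nat, 3 <= i -> 1 <= m <= size S ->
         nth 0 S m.-1 = i.-1 ->
         (forall m', 1 <= m' < m -> nth 0 S m'.-1 != i.-1) ->
         exists t, 1 <= t <= m /\ matchesZP (i - 2) (sub S t m.-1)),
      (forall i m : nat, 3 <= i -> 1 <= m <= size S ->
         nth 0 S m.-1 = i.-1 ->
         (exists m', 1 <= m' < m /\ nth 0 S m'.-1 = i.-1) ->
         pal_dependent S m \/
         exists t, 1 <= t <= m /\ matchesZP (i - 2) (sub S t m.-1))
    & (forall (T : eqType) (w : seq T), manacher w = A ->
         size (undup S) <= size (undup w))].
Proof.
move=> _ mS minA; have minS : lexmin S by move=> S'; rewrite mS; apply: minA.
have zimin i m : 3 <= i -> 1 <= m <= size S -> nth 0 S m.-1 = i.-1 ->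
    ~ pal_dependent S m -> exists t, 1 <= t <= m /\ matchesZP (i - 2) (sub S t m.-1).
  move=> i3 m_in Sm indep; have := lexmin_matchesZP_indep minS m_in indep.
  by rewrite /nth1 Sm (_ : i.-1 - 1 = i - 2); [apply; lia | lia].
split.
- move=> i m i3 m_in Sm first; apply: zimin => // /(pal_dependent_earlier 0) [m' m'm].
  by rewrite /nth1 Sm; apply/eqP/first.
- move=> i m i3 m_in Sm _; have [dep | indep] := classic (pal_dependent S m); first by left.
  by right; apply: zimin.
- by move=> T w mw; apply: lexmin_undup_size minS _; rewrite mw mS.
Qed.
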